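(* As $n\to\infty$, $$\frac{\log_2(n)}{E_n(\gamma)}\to 1,$$ where $E_n(\gamma)$ is the average value of $\gamma(t)$ when $t$ is uniformly distributed on $\mathcal{T}_n$.
   Context: $\mathcal{T}_n$ is the set of ordered rooted binary trees (every internal node has exactly two ordered children) with $n$ leaves. A tree is a caterpillar if every node is either a leaf or has at least one leaf among its direct children. The subtree of $t$ at a node $v$ consists of $v$ and all its descendants, and $\gamma(t)$ is the largest number of leaves of a caterpillar occurring as the subtree of $t$ at some node. *)

From Stdlib Require Import Reals List.
Import ListNotations.

Inductive tree : Type :=
| Leaf : tree
| Node : tree -> tree -> tree.

Fixpoint leaves (t : tree) : nat :=
  match t with
  | Leaf => 1
  | Node l r => leaves l + leaves r
  end.

Definition is_leaf (t : tree) : bool :=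
  match t with Leaf => true | Node _ _ => false end.

Fixpoint caterpillar (t : tree) : bool :=
  match t with
  | Leaf => true
  | Node l r => (is_leaf l || is_leaf r) && caterpillar l && caterpillar r
  end.

Fixpoint subtrees (t : tree) : list tree :=
  match t with
  | Leaf => [Leaf]
  | Node l r => t :: (subtrees l ++ subtrees r)
  end.

Definition gamma (t : tree) : nat :=
  fold_right Nat.max 0 (map leaves (filter caterpillar (subtrees t))).

(* l enumerates T_n: exactly the trees with n leaves, each once *)
Definition enumerates (n : nat) (l : list tree) : Prop :=
  NoDup l /\ forall t, In t l <-> leaves t = n.

(* average of gamma over a list (uniform distribution on its elements) *)
Definition avg_gamma (l : list tree) : R :=
  fold_right Rplus 0%R (map (fun t => INR (gamma t)) l) / INR (length l).

Definition log2 (x : R) : R := (ln x / ln 2)%R.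

(* Let N_n = |T_n| (the Catalan numbers) and a = floor(log2 n).
   - Upper bound.  Splitting trees at the root turns the total number of
     caterpillar subtrees with k leaves over T_n into a convolution recurrence
     with solution 2^(k-2) m N_m, m = n + 1 - k.  Together with Wallis-type
     estimates on N this bounds the number of trees with gamma >= k by
     2 n N_n / 2^k, and a layer-cake summation gives E_n(gamma) <= a + 4.
   - Lower bound.  The number F_k(n) of trees with gamma < k obeys
     F_n <= sum_i F_i F_(n-i) - [n = k] 2^(k-2); comparing partial generating
     sums with the fixed point of P |-> x + P^2 - 2^(k-2) x^k shows that they
     stay bounded at x = (1 + 2^-(k+1))/4 > 1/4.  Hence F_k(n) is a fraction
     O(1/n^2) of N_n ~ 4^n when k = a - log2 a - 4, and E_n(gamma) >= k - 1.
   Since log2 a = o(a), log2 n / E_n(gamma) tends to 1. *)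

From Stdlib Require Import Reals List Lia Lra Psatz Permutation.
Import ListNotations.
Open Scope bool_scope.
Open Scope nat_scope.

Lemma leaves_pos t : 1 <= leaves t.
Proof. induction t; simpl; lia. Qed.

Lemma leaves_one t : leaves t = 1 -> t = Leaf.
Proof.
  destruct t as [|l r]; simpl; auto.
  pose proof (leaves_pos l); pose proof (leaves_pos r); lia.
Qed.

Lemma fold_max_ub l x : In x l -> x <= fold_right Nat.max 0 l.
Proof.
  induction l as [|y l IH]; simpl; [easy|].
  intros [<-|H]; [lia|]. specialize (IH H); lia.
Qed.

Lemma fold_max_lub l B : (forall x, In x l -> x <= B) -> fold_right Nat.max 0 l <= B.
Proof.
  induction l as [|y l IH]; simpl; intros H; [lia|].
  assert (y <= B) by auto. assert (fold_right Nat.max 0 l <= B) by auto. lia.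
Qed.

Lemma fold_max_in l : fold_right Nat.max 0 l = 0 \/ In (fold_right Nat.max 0 l) l.
Proof.
  induction l as [|y l [H|H]]; simpl; auto.
  - rewrite H. destruct (Nat.eq_dec y 0); [left | right; left]; lia.
  - destruct (Nat.max_spec y (fold_right Nat.max 0 l)) as [[_ ->]|[_ ->]]; auto.
Qed.

Lemma subtrees_self t : In t (subtrees t).
Proof. destruct t; simpl; auto. Qed.

Lemma subtrees_trans t s u : In s (subtrees t) -> In u (subtrees s) -> In u (subtrees t).
Proof.
  induction t as [|l IHl r IHr]; simpl; intros Hs Hu.
  - destruct Hs as [<-|[]]; exact Hu.
  - destruct Hs as [<-|Hs]; [exact Hu|]. right.
    apply in_app_or in Hs as [Hs|Hs]; apply in_or_app; auto.
Qed.

Lemma subtrees_node_l l r : In l (subtrees (Node l r)).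
Proof. simpl. right. apply in_or_app. left. apply subtrees_self. Qed.

Lemma subtrees_node_r l r : In r (subtrees (Node l r)).
Proof. simpl. right. apply in_or_app. right. apply subtrees_self. Qed.

Lemma subtrees_leaves t s : In s (subtrees t) -> leaves s <= leaves t.
Proof.
  induction t as [|l IHl r IHr]; simpl; intros H.
  - destruct H as [<-|[]]; simpl; lia.
  - destruct H as [<-|H]; simpl; [lia|].
    apply in_app_or in H as [H|H]; [apply IHl in H | apply IHr in H]; lia.
Qed.

Lemma gamma_le_leaves t : gamma t <= leaves t.
Proof.
  apply fold_max_lub. intros x Hx.
  apply in_map_iff in Hx as [s [<- Hs]]. apply filter_In in Hs as [Hs _].
  exact (subtrees_leaves t s Hs).
Qed.

Lemma gamma_mono t s : In s (subtrees t) -> gamma s <= gamma t.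
Proof.
  intros Hs. apply fold_max_lub. intros x Hx.
  apply in_map_iff in Hx as [u [<- Hu]]. apply filter_In in Hu as [Hu Hc].
  apply fold_max_ub, in_map, filter_In. split; [eapply subtrees_trans; eauto | exact Hc].
Qed.

Lemma gamma_node l r : Nat.max (gamma l) (gamma r) <= gamma (Node l r).
Proof.
  pose proof (gamma_mono _ _ (subtrees_node_l l r)).
  pose proof (gamma_mono _ _ (subtrees_node_r l r)). lia.
Qed.

Lemma gamma_caterpillar t : caterpillar t = true -> leaves t <= gamma t.
Proof. intros H. apply fold_max_ub, in_map, filter_In. split; [apply subtrees_self | exact H]. Qed.

(* A caterpillar contains caterpillar subtrees of every smaller size (peel leaves off). *)
Lemma caterpillar_sizes s k : caterpillar s = true -> 1 <= k <= leaves s ->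
  exists s', In s' (subtrees s) /\ caterpillar s' = true /\ leaves s' = k.
Proof.
  induction s as [|l IHl r IHr]; intros Hc Hk.
  - exists Leaf. simpl in *. repeat split; auto. lia.
  - destruct (Nat.eq_dec k (leaves (Node l r))) as [E|E].
    { exists (Node l r). repeat split; auto. apply subtrees_self. }
    simpl in Hc. apply andb_prop in Hc as [Hc Hcr]. apply andb_prop in Hc as [Hleaf Hcl].
    simpl in Hk, E. destruct l as [|l1 l2]; simpl in Hleaf.
    + destruct (IHr Hcr) as [s' [Hs' Hs'c]]; [simpl in *; lia|].
      exists s'. split; [eapply subtrees_trans; [apply subtrees_node_r | exact Hs'] | exact Hs'c].
    + destruct r; [|discriminate].
      destruct (IHl Hcl) as [s' [Hs' Hs'c]]; [simpl in *; lia|].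
      exists s'. split; [eapply subtrees_trans; [apply subtrees_node_l | exact Hs'] | exact Hs'c].
Qed.

Lemma gamma_sizes t k : 1 <= k <= gamma t ->
  exists s, In s (subtrees t) /\ caterpillar s = true /\ leaves s = k.
Proof.
  intros Hk. destruct (fold_max_in (map leaves (filter caterpillar (subtrees t)))) as [H|H];
    fold (gamma t) in H; [lia|].
  apply in_map_iff in H as [s [Hs Hin]]. apply filter_In in Hin as [Hin Hc].
  destruct (caterpillar_sizes s k Hc) as [s' [H1 H2]]; [lia|].
  exists s'. split; [eapply subtrees_trans; eauto | exact H2].
Qed.

Definition ncatsub k t :=
  length (filter (fun s => caterpillar s && Nat.eqb (leaves s) k) (subtrees t)).

Lemma ncatsub_node k l r : ncatsub k (Node l r) =
  (if caterpillar (Node l r) && Nat.eqb (leaves (Node l r)) k then 1 else 0)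
  + ncatsub k l + ncatsub k r.
Proof.
  unfold ncatsub. cbn [subtrees filter].
  destruct (_ && _); cbn [length]; rewrite filter_app, length_app; lia.
Qed.

Lemma ncatsub_pos k t : 1 <= k <= gamma t -> 1 <= ncatsub k t.
Proof.
  intros H. destruct (gamma_sizes t k H) as [s [Hs [Hc Hl]]]. unfold ncatsub.
  assert (Hin : In s (filter (fun s => caterpillar s && Nat.eqb (leaves s) k) (subtrees t))).
  { apply filter_In. rewrite Hc, Hl, Nat.eqb_refl. auto. }
  destruct (filter _ _); [easy | simpl; lia].
Qed.

(* [caterpillars m]: the caterpillars with [m + 2] leaves; there are [2 ^ m] of them. *)
Fixpoint caterpillars (m : nat) : list tree :=
  match m with
  | O => [Node Leaf Leaf]
  | S m => map (Node Leaf) (caterpillars m) ++ map (fun t => Node t Leaf) (caterpillars m)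
  end.

Lemma caterpillars_length m : length (caterpillars m) = 2 ^ m.
Proof. induction m; simpl; auto. rewrite length_app, !length_map. lia. Qed.

Lemma caterpillars_not_leaf m : ~ In Leaf (caterpillars m).
Proof.
  destruct m; simpl; intros H.
  - destruct H as [H|[]]; discriminate.
  - apply in_app_or in H as [H|H]; apply in_map_iff in H as [x [E _]]; discriminate.
Qed.

Lemma caterpillars_nodup m : NoDup (caterpillars m).
Proof.
  induction m; simpl.
  - constructor; [easy | constructor].
  - apply NoDup_app; try (apply FinFun.Injective_map_NoDup; auto; intros x y E; injection E; auto).
    intros a Ha Hb. apply in_map_iff in Ha as [x [<- _]]. apply in_map_iff in Hb as [y [E Hy]].
    injection E; intros _ ->. exact (caterpillars_not_leaf m Hy).
Qed.

Lemma caterpillars_spec m t :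
  In t (caterpillars m) <-> caterpillar t = true /\ leaves t = S (S m).
Proof.
  revert t; induction m as [|m IH]; intros t; simpl; split.
  - intros [<-|[]]. simpl; auto.
  - intros [Hc Hl]. destruct t as [|l r]; simpl in Hl; [lia|].
    pose proof (leaves_pos l); pose proof (leaves_pos r).
    rewrite (leaves_one l), (leaves_one r); auto; lia.
  - intros H. apply in_app_or in H as [H|H]; apply in_map_iff in H as [x [<- Hx]];
      apply IH in Hx as [Hc Hl]; simpl; rewrite Hc, ?andb_true_r; simpl; split; auto; lia.
  - intros [Hc Hl]. destruct t as [|l r]; simpl in Hl; [lia|]. simpl in Hc.
    apply andb_prop in Hc as [Hc Hcr]. apply andb_prop in Hc as [Hleaf Hcl].
    apply in_or_app. destruct l.
    + left. apply in_map, IH. simpl in Hl. split; auto; lia.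
    + destruct r; [|discriminate]. right. apply (in_map (fun t => Node t Leaf)), IH.
      simpl in Hl |- *. split; auto; lia.
Qed.

Open Scope R_scope.

Fixpoint rsum (g : nat -> R) (n : nat) : R :=
  match n with O => 0 | S m => rsum g m + g m end.

Lemma rsum_S g n : rsum g (S n) = rsum g n + g n.
Proof. reflexivity. Qed.

Lemma rsum_ext g h n : (forall i, (i < n)%nat -> g i = h i) -> rsum g n = rsum h n.
Proof. induction n; simpl; intros H; auto. rewrite IHn, H; auto. Qed.

Lemma rsum_le g h n : (forall i, (i < n)%nat -> g i <= h i) -> rsum g n <= rsum h n.
Proof.
  induction n; simpl; intros H; [lra|].
  assert (g n <= h n) by auto. assert (rsum g n <= rsum h n) by auto. lra.
Qed.

Lemma rsum_const c n : rsum (fun _ => c) n = INR n * c.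
Proof. induction n; [simpl; ring|]. rewrite rsum_S, IHn, S_INR. ring. Qed.

Lemma rsum_nonneg g n : (forall i, (i < n)%nat -> 0 <= g i) -> 0 <= rsum g n.
Proof.
  intros H. apply Rle_trans with (rsum (fun _ => 0) n); [rewrite rsum_const; lra|].
  apply rsum_le; auto.
Qed.

Lemma rsum_plus g h n : rsum (fun i => g i + h i) n = rsum g n + rsum h n.
Proof. induction n; simpl; lra. Qed.

Lemma rsum_minus g h n : rsum (fun i => g i - h i) n = rsum g n - rsum h n.
Proof. induction n; simpl; lra. Qed.

Lemma rsum_scal c g n : rsum (fun i => c * g i) n = c * rsum g n.
Proof. induction n; simpl; [ring|]. rewrite IHn; ring. Qed.

Lemma rsum_shift g n : rsum g (S n) = g O + rsum (fun i => g (S i)) n.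
Proof. induction n; simpl in *; [ring|]. rewrite IHn. ring. Qed.

Lemma rsum_split g p q : rsum g (p + q) = rsum g p + rsum (fun i => g (p + i)%nat) q.
Proof.
  induction q; simpl; [rewrite Nat.add_0_r; ring|].
  rewrite Nat.add_succ_r. simpl. rewrite IHq. ring.
Qed.

Lemma rsum_rev g n : rsum g (S n) = rsum (fun i => g (n - i)%nat) (S n).
Proof.
  revert g; induction n; intros g; [simpl; ring|].
  rewrite rsum_shift, IHn, (rsum_S (fun i => g (S n - i)%nat) (S n)).
  replace (S n - S n)%nat with O by lia. rewrite Rplus_comm. f_equal.
  apply rsum_ext. intros i Hi. f_equal. lia.
Qed.

Lemma rsum_single k c (f : nat -> R) M : (k < M)%nat ->
  rsum (fun n => (if Nat.eqb n k then c else 0) * f n) M = c * f k.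
Proof.
  intros HkM. replace M with (k + S (M - S k))%nat by lia. rewrite rsum_split, rsum_shift.
  rewrite (rsum_ext _ (fun _ => 0) k), (rsum_ext _ (fun _ => 0) (M - S k)), !rsum_const.
  - rewrite Nat.add_0_r, Nat.eqb_refl. ring.
  - intros i _. destruct (Nat.eqb_spec (k + S i) k); [lia | ring].
  - intros i Hi. destruct (Nat.eqb_spec i k); [lia | ring].
Qed.

Lemma rsum_conv_sym a b n :
  rsum (fun i => a i * b (n - i)%nat + b i * a (n - i)%nat) (S n)
  = 2 * rsum (fun i => a i * b (n - i)%nat) (S n).
Proof.
  rewrite rsum_plus, (rsum_rev (fun i => b i * a (n - i)%nat)).
  rewrite (rsum_ext (fun i => b (n - i)%nat * a (n - (n - i))%nat) (fun i => a i * b (n - i)%nat)).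
  - ring.
  - intros i Hi. replace (n - (n - i))%nat with i by lia. ring.
Qed.

Lemma rsum_mono_n a p q : (forall i, 0 <= a i) -> (p <= q)%nat -> rsum a p <= rsum a q.
Proof.
  intros H Hpq. replace q with (p + (q - p))%nat by lia. rewrite rsum_split.
  assert (0 <= rsum (fun i => a (p + i)%nat) (q - p)) by (apply rsum_nonneg; auto). lra.
Qed.

Definition lsum {A} (F : A -> R) (l : list A) : R := fold_right Rplus 0 (map F l).

Lemma lsum_nil {A} (F : A -> R) : lsum F [] = 0.
Proof. reflexivity. Qed.

Lemma lsum_cons {A} (F : A -> R) x l : lsum F (x :: l) = F x + lsum F l.
Proof. reflexivity. Qed.

Lemma lsum_app {A} (F : A -> R) l1 l2 : lsum F (l1 ++ l2) = lsum F l1 + lsum F l2.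
Proof.
  induction l1 as [|x l1 IH]; [rewrite lsum_nil; simpl; ring|].
  simpl app. rewrite !lsum_cons, IH. ring.
Qed.

Lemma lsum_ext_in {A} (F G : A -> R) l : (forall x, In x l -> F x = G x) -> lsum F l = lsum G l.
Proof.
  induction l; intros H; auto. rewrite !lsum_cons, H, IHl; simpl; auto.
  intros; apply H; simpl; auto.
Qed.

Lemma lsum_le_in {A} (F G : A -> R) l : (forall x, In x l -> F x <= G x) -> lsum F l <= lsum G l.
Proof.
  induction l; intros H; rewrite ?lsum_nil, ?lsum_cons; [lra|].
  assert (F a <= G a) by (apply H; simpl; auto).
  assert (lsum F l <= lsum G l) by (apply IHl; intros; apply H; simpl; auto). lra.
Qed.

Lemma lsum_plus {A} (F G : A -> R) l : lsum (fun x => F x + G x) l = lsum F l + lsum G l.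
Proof. induction l; rewrite ?lsum_nil, ?lsum_cons; [lra|]. rewrite IHl. ring. Qed.

Lemma lsum_minus {A} (F G : A -> R) l : lsum (fun x => F x - G x) l = lsum F l - lsum G l.
Proof. induction l; rewrite ?lsum_nil, ?lsum_cons; [lra|]. rewrite IHl. ring. Qed.

Lemma lsum_scal {A} c (F : A -> R) l : lsum (fun x => c * F x) l = c * lsum F l.
Proof. induction l; rewrite ?lsum_nil, ?lsum_cons; [lra|]. rewrite IHl. ring. Qed.

Lemma lsum_const {A} c (l : list A) : lsum (fun _ => c) l = c * INR (length l).
Proof. induction l; rewrite ?lsum_nil, ?lsum_cons; simpl length; [simpl; lra|]. rewrite IHl, S_INR. ring. Qed.

Lemma lsum_nonneg {A} (F : A -> R) l : (forall x, In x l -> 0 <= F x) -> 0 <= lsum F l.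
Proof.
  intros H. apply Rle_trans with (lsum (fun _ : A => 0) l); [rewrite lsum_const; lra|].
  apply lsum_le_in; auto.
Qed.

Lemma lsum_map {A B} (F : B -> R) (g : A -> B) l : lsum F (map g l) = lsum (fun x => F (g x)) l.
Proof. unfold lsum. rewrite map_map. reflexivity. Qed.

Lemma lsum_flat_map {A B} (F : B -> R) (g : A -> list B) l :
  lsum F (flat_map g l) = lsum (fun x => lsum F (g x)) l.
Proof. induction l; simpl flat_map; rewrite ?lsum_cons; auto. rewrite lsum_app, IHl. reflexivity. Qed.

Lemma lsum_seq (h : nat -> R) s n : lsum h (seq s n) = rsum (fun i => h (s + i)%nat) n.
Proof.
  revert s; induction n; intros s; auto. rewrite rsum_shift. simpl seq.
  rewrite lsum_cons, IHn, Nat.add_0_r. f_equal. apply rsum_ext; intros; f_equal; lia.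
Qed.

Lemma lsum_perm {A} (F : A -> R) l l' : Permutation l l' -> lsum F l = lsum F l'.
Proof. induction 1; rewrite ?lsum_cons; auto. rewrite IHPermutation; auto. ring. congruence. Qed.

Lemma lsum_count {A} (p : A -> bool) l :
  lsum (fun x => if p x then 1 else 0) l = INR (length (filter p l)).
Proof.
  induction l; auto. rewrite lsum_cons, IHl. simpl filter.
  destruct (p a); simpl length; rewrite ?S_INR; lra.
Qed.

Lemma lsum_rsum_swap {A} (h : nat -> A -> R) l m :
  lsum (fun t => rsum (fun j => h j t) m) l = rsum (fun j => lsum (h j) l) m.
Proof. induction m; simpl rsum; [rewrite lsum_const; ring | rewrite lsum_plus, IHm; reflexivity]. Qed.

Lemma NoDup_flat_map_disj {A B} (f : A -> list B) (l : list A) :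
  NoDup l -> (forall x, In x l -> NoDup (f x)) ->
  (forall x y z, In x l -> In y l -> In z (f x) -> In z (f y) -> x = y) ->
  NoDup (flat_map f l).
Proof.
  induction l as [|a l IH]; intros H1 H2 H3; simpl; [constructor|]. inversion H1; subst.
  apply NoDup_app.
  - apply H2; simpl; auto.
  - apply IH; auto; [intros; apply H2 | intros x y z Hx Hy; apply H3]; simpl; auto.
  - intros z Hz Hz'. apply in_flat_map in Hz' as [y [Hy Hzy]].
    assert (a = y) by (apply (H3 a y z); simpl; auto). subst. contradiction.
Qed.

Lemma sq_le_reg x y : 0 <= y -> x ^ 2 <= y ^ 2 -> x <= y.
Proof. intros Hy H. destruct (Rle_lt_dec x y) as [|Hlt]; [assumption | nra]. Qed.

Lemma bernoulli u m : 0 <= u -> 1 + INR m * u <= (1 + u) ^ m.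
Proof.
  intros Hu. induction m; [simpl; lra|].
  rewrite S_INR. simpl pow. assert (0 <= INR m) by apply pos_INR. nra.
Qed.

Lemma bernoulli_converse u k : 0 <= u -> INR k * u <= / 2 -> (1 + u) ^ k <= 1 + 2 * INR k * u.
Proof.
  intros Hu. induction k; intros Hk; [simpl; lra|].
  rewrite S_INR in *. simpl pow. assert (0 <= INR k) by apply pos_INR.
  assert (IH : (1 + u) ^ k <= 1 + 2 * INR k * u) by (apply IHk; nra). nra.
Qed.

(* (1 + 2^-j)^n >= 2^m as soon as n >= 2^j m (Bernoulli on blocks of 2^j). *)
Lemma one_plus_pow_growth j m n : (2 ^ j * m <= n)%nat -> 2 ^ m <= (1 + / 2 ^ j) ^ n.
Proof.
  intros Hn. set (u := / 2 ^ j).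
  assert (Hu0 : 0 <= u) by (left; apply Rinv_0_lt_compat, pow_lt; lra).
  assert (Hu : INR (2 ^ j) * u = 1) by (unfold u; rewrite pow_INR; apply Rinv_r, pow_nonzero; simpl; lra).
  assert (Hblock : 2 <= (1 + u) ^ (2 ^ j)) by (assert (H := bernoulli u (2 ^ j) Hu0); lra).
  apply Rle_trans with ((1 + u) ^ (2 ^ j * m)).
  - rewrite pow_mult. apply pow_incr. lra.
  - apply Rle_pow; [lra | exact Hn].
Qed.

Lemma geometric_tail K m : rsum (fun j => / 2 ^ (K + 1 + j)) m <= / 2 ^ K.
Proof.
  assert (E : forall p, rsum (fun j => / 2 ^ (j + 1)) p = 1 - / 2 ^ p).
  { induction p as [|p IH]; [simpl; lra|]. rewrite rsum_S, IH, Nat.add_1_r. simpl pow.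
    assert (0 < 2 ^ p) by (apply pow_lt; lra). field. lra. }
  rewrite (rsum_ext _ (fun j => / 2 ^ K * / 2 ^ (j + 1))).
  - rewrite rsum_scal, E. assert (0 < / 2 ^ m) by (apply Rinv_0_lt_compat, pow_lt; lra).
    assert (0 < / 2 ^ K) by (apply Rinv_0_lt_compat, pow_lt; lra). nra.
  - intros i _. rewrite <- Rinv_mult, <- pow_add. f_equal. f_equal. lia.
Qed.

(* Layer-cake bound for an integer g <= n: count the levels K+1, ..., k0 - 1
   one by one, bound everything below K by K and everything from k0 on by n. *)
Lemma layer_cake (g K k0 n : nat) : (g <= n)%nat -> (K <= k0)%nat ->
  INR g <= INR K + rsum (fun j => if Nat.leb (K + 1 + j) g then 1 else 0) (k0 - K)
           + INR n * (if Nat.leb k0 g then 1 else 0).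
Proof.
  intros Hg HK.
  assert (Count : forall m, INR (Nat.min m (g - K)) <= rsum (fun j => if Nat.leb (K + 1 + j) g then 1 else 0) m).
  { induction m; [simpl; lra|]. rewrite rsum_S. destruct (Nat.leb_spec (K + 1 + m) g).
    - replace (Nat.min (S m) (g - K)) with (S (Nat.min m (g - K))) by lia. rewrite S_INR. lra.
    - replace (Nat.min (S m) (g - K)) with (Nat.min m (g - K)) by lia. lra. }
  assert (S0 : 0 <= rsum (fun j => if Nat.leb (K + 1 + j) g then 1 else 0) (k0 - K)).
  { apply rsum_nonneg. intros. destruct (Nat.leb _ _); lra. }
  assert (0 <= INR K) by apply pos_INR.
  destruct (Nat.leb_spec k0 g); [apply le_INR in Hg; lra|].
  assert (C := Count (k0 - K)%nat).
  replace (Nat.min (k0 - K) (g - K)) with (g - K)%nat in C by lia.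
  destruct (Nat.le_gt_cases K g).
  - rewrite minus_INR in C by auto. lra.
  - apply lt_INR in H1. lra.
Qed.

Open Scope nat_scope.

Lemma pow2_ge_linear b : 4 <= b -> 4 * b <= 2 ^ b.
Proof. induction 1; simpl; lia. Qed.

Lemma pow2_ge_square b : 4 <= b -> b * b <= 2 ^ b.
Proof. induction 1; [simpl; lia|]. rewrite Nat.pow_succ_r'. nia. Qed.

Lemma log2_small a : 20 <= a -> 4 * Nat.log2 a <= a.
Proof.
  intros Ha. destruct (Nat.log2_spec a ltac:(lia)) as [H1 H2].
  destruct (Nat.le_gt_cases 4 (Nat.log2 a)) as [H|H]; [pose proof (pow2_ge_linear _ H)|]; lia.
Qed.

(* (log2 a)^2 = O(a), the source of log2 a = o(a). *)
Lemma log2_square a : 1 <= a -> Nat.log2 a * Nat.log2 a <= a + 16.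
Proof.
  intros Ha. destruct (Nat.log2_spec a ltac:(lia)) as [H1 H2].
  destruct (Nat.le_gt_cases 4 (Nat.log2 a)) as [H|H]; [pose proof (pow2_ge_square _ H)|]; nia.
Qed.

Open Scope R_scope.

(** * Partial generating sums of quadratic recurrences *)

Lemma cauchy_product_eq (a : nat -> R) M :
  rsum (fun n => rsum (fun i => a i * a (n - i)%nat) (S n)) (S M)
  = rsum (fun i => a i * rsum a (S (M - i))) (S M).
Proof.
  induction M; [simpl; ring|].
  rewrite rsum_S, IHM, (rsum_S (fun i => a i * rsum a (S (S M - i))) (S M)).
  rewrite (rsum_ext (fun i => a i * rsum a (S (S M - i)))
                    (fun i => a i * rsum a (S (M - i)) + a i * a (S M - i)%nat)).
  - rewrite rsum_plus, Nat.sub_diag, (rsum_S (fun i => a i * a (S M - i)%nat) (S M)), Nat.sub_diag.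
    simpl (rsum a 1). ring.
  - intros i Hi. replace (S (S M - i)) with (S (S (M - i))) by lia. rewrite rsum_S.
    replace (S (M - i)) with (S M - i)%nat by lia. ring.
Qed.

Lemma cauchy_product_le (a : nat -> R) M : (forall i, 0 <= a i) -> a O = 0 -> (1 <= M)%nat ->
  rsum (fun n => rsum (fun i => a i * a (n - i)%nat) (S n)) (S M) <= (rsum a M) ^ 2.
Proof.
  intros Ha A0 HM. rewrite cauchy_product_eq. destruct M as [|M]; [lia|].
  rewrite rsum_S. replace (S M - S M)%nat with O by lia. simpl (rsum a 1). rewrite A0.
  replace (rsum a (S M) ^ 2) with (rsum (fun i => a i * rsum a (S M)) (S M) + 0).
  - apply Rplus_le_compat; [|lra]. apply rsum_le. intros i Hi.
    destruct i as [|i]; [rewrite A0; lra|].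
    apply Rmult_le_compat_l; auto. apply rsum_mono_n; auto. lia.
  - rewrite (rsum_ext _ (fun i => rsum a (S M) * a i)) by (intros; ring). rewrite rsum_scal. ring.
Qed.

Lemma partial_gf_step (g d : nat -> R) x M : 0 < x -> (forall i, 0 <= g i) ->
  g O = 0 -> g 1%nat <= 1 -> d O = 0 -> d 1%nat = 0 ->
  (forall n, (2 <= n)%nat -> g n <= rsum (fun i => g i * g (n - i)%nat) (S n) - d n) ->
  (1 <= M)%nat ->
  rsum (fun i => g i * x ^ i) (S M)
  <= x + (rsum (fun i => g i * x ^ i) M) ^ 2 - rsum (fun n => d n * x ^ n) (S M).
Proof.
  intros Hx Hg G0 G1 D0 D1 Hrec HM. set (a := fun i => g i * x ^ i).
  assert (Ha : forall i, 0 <= a i) by (intros i; apply Rmult_le_pos; [auto | apply pow_le; lra]).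
  assert (HC := cauchy_product_le a M Ha ltac:(unfold a; rewrite G0; ring) HM).
  assert (E : forall n, rsum (fun i => a i * a (n - i)%nat) (S n)
                        = x ^ n * rsum (fun i => g i * g (n - i)%nat) (S n)).
  { intros n. rewrite <- rsum_scal. apply rsum_ext. intros i Hi. unfold a.
    replace (x ^ n) with (x ^ i * x ^ (n - i)) by (rewrite <- pow_add; f_equal; lia). ring. }
  assert (Hterm : rsum a (S M) <= rsum (fun n => rsum (fun i => a i * a (n - i)%nat) (S n)) (S M)
            + rsum (fun n => if Nat.eqb n 1 then x else 0) (S M) - rsum (fun n => d n * x ^ n) (S M)).
  { rewrite <- rsum_plus, <- rsum_minus. apply rsum_le. intros n Hn. rewrite E.
    destruct n as [|[|n]]; [unfold a; simpl; rewrite G0, D0; lra | unfold a; simpl; rewrite G0, D1; nra|].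
    simpl Nat.eqb. cbv iota. unfold a.
    assert (H := Hrec (S (S n)) ltac:(lia)). assert (0 <= x ^ S (S n)) by (apply pow_le; lra). nra. }
  assert (HX : rsum (fun n => if Nat.eqb n 1 then x else 0) (S M) = x).
  { destruct M; [lia|]. rewrite !rsum_shift, (rsum_ext _ (fun _ => 0)), rsum_const by reflexivity.
    simpl. ring. }
  fold a. lra.
Qed.

Lemma partial_sums_bounded (P : nat -> R) x y delta k :
  (forall M, 0 <= P M) -> x + y ^ 2 - delta <= y ->
  (forall M, (M <= k)%nat -> P M <= y) ->
  (forall M, (k <= M)%nat -> P (S M) <= x + P M ^ 2 - delta) ->
  forall M, P M <= y.
Proof.
  intros HP Hfix Hsmall Hstep M. induction M as [|M IH]; [apply Hsmall; lia|].
  destruct (Nat.le_gt_cases k M) as [HkM|HkM]; [|apply Hsmall; lia].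
  assert (Hs := Hstep M HkM). assert (0 <= P M) by apply HP.
  assert (P M ^ 2 <= y ^ 2) by (apply pow_incr; lra). lra.
Qed.

(** * Catalan numbers *)

(* Growth estimates for any sequence obeying the Catalan recurrence
   N_0 = 0, N_1 = 1, N_n = sum_(i <= n) N_i N_(n-i); the main tool is the
   first-order recurrence (n + 1) N_(n+1) = (4n - 2) N_n. *)
Section Catalan.
Variable N : nat -> R.
Hypothesis N0 : N O = 0.
Hypothesis N1 : N 1%nat = 1.
Hypothesis Nconv : forall n, (2 <= n)%nat -> N n = rsum (fun i => N i * N (n - i)%nat) (S n).

(* Symmetrising the convolution: sum_j j N_j N_(m-j) = m N_m / 2. *)
Lemma catalan_weighted m : (2 <= m)%nat ->
  rsum (fun j => INR j * N j * N (m - j)%nat) (S m) = INR m * N m / 2.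
Proof.
  intros Hm. set (S0 := rsum _ _).
  assert (E : S0 = rsum (fun j => INR (m - j) * N j * N (m - j)%nat) (S m)).
  { unfold S0. rewrite rsum_rev. apply rsum_ext. intros i Hi.
    replace (m - (m - i))%nat with i by lia. ring. }
  assert (E2 : S0 + S0 = INR m * N m).
  { rewrite E at 2. unfold S0. rewrite <- rsum_plus, (Nconv m Hm), <- rsum_scal.
    apply rsum_ext. intros i Hi. rewrite minus_INR by lia. ring. }
  lra.
Qed.

(* The first-order recurrence (n + 1) N_(n+1) = (4n - 2) N_n, by strong
   induction using the weighted convolution identity at n and n + 1. *)
Lemma catalan_step n : (1 <= n)%nat -> INR (S n) * N (S n) = (4 * INR n - 2) * N n.
Proof.
  induction n as [n IH] using (well_founded_induction Wf_nat.lt_wf). intros Hn.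
  destruct (Nat.eq_dec n 1) as [->|Hn1].
  { rewrite (Nconv 2) by lia. simpl. rewrite N0, N1. lra. }
  assert (HS : INR (S n) * N (S n) = 2 * rsum (fun j => INR j * N j * N (S n - j)%nat) (S (S n))).
  { rewrite catalan_weighted by lia. field. }
  rewrite HS, rsum_shift. simpl (INR 0). rewrite !Rmult_0_l, Rplus_0_l.
  (* shift the index and apply the induction hypothesis to each factor j N_j *)
  assert (HP : rsum (fun i => INR (S i) * N (S i) * N (S n - S i)%nat) (S n) =
    rsum (fun j => 4 * (INR j * N j * N (n - j)%nat) - 2 * (N j * N (n - j)%nat)
                   + (if Nat.eqb j 0 then N n else 0)) (S n)).
  { apply rsum_ext. intros j Hj. replace (S n - S j)%nat with (n - j)%nat by lia.
    destruct (Nat.eq_dec j 0) as [->|Hj0]; [simpl; rewrite N0, N1, Nat.sub_0_r; ring|].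
    destruct (Nat.eq_dec j n) as [->|Hjn].
    - rewrite Nat.sub_diag, N0. destruct n; [lia|]. simpl Nat.eqb. cbv iota. ring.
    - rewrite IH by lia. destruct j; [lia|]. simpl Nat.eqb. cbv iota. ring. }
  rewrite HP, !rsum_plus, rsum_minus, !rsum_scal, catalan_weighted, <- Nconv by lia.
  rewrite rsum_shift. simpl Nat.eqb.
  rewrite (rsum_ext _ (fun _ => 0)) by reflexivity. rewrite rsum_const. field.
Qed.

Lemma catalan_pos n : (1 <= n)%nat -> 0 < N n.
Proof.
  induction n; intros Hn; [lia|]. destruct n; [rewrite N1; lra|].
  assert (H := catalan_step (S n) ltac:(lia)). assert (0 < N (S n)) by (apply IHn; lia).
  assert (1 <= INR (S n)) by (apply (le_INR 1); lia).
  assert (0 < INR (S (S n))) by (apply lt_0_INR; lia).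
  assert (0 < INR (S (S n)) * N (S (S n))) by (rewrite H; apply Rmult_lt_0_compat; lra).
  apply (Rmult_lt_reg_l (INR (S (S n)))); lra.
Qed.

Lemma catalan_nonneg n : 0 <= N n.
Proof. destruct n; [rewrite N0; lra | left; apply catalan_pos; lia]. Qed.

Lemma catalan_quarter M : rsum (fun i => N i * (/ 4) ^ i) M <= / 2.
Proof.
  apply (partial_sums_bounded (rsum (fun i => N i * (/ 4) ^ i)) (/ 4) (/ 2) 0 1).
  - intros K. apply rsum_nonneg. intros i _. apply Rmult_le_pos; [apply catalan_nonneg | apply pow_le; lra].
  - lra.
  - intros K HK. destruct K as [|[|]]; [simpl; lra | simpl; rewrite N0; lra | lia].
  - intros K HK.
    assert (H := partial_gf_step N (fun _ => 0) (/ 4) K ltac:(lra) catalan_nonneg N0 ltac:(lra)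
                   eq_refl eq_refl ltac:(intros n Hn; rewrite (Nconv n Hn) at 1; lra) HK).
    rewrite (rsum_ext (fun n => 0 * (/ 4) ^ n) (fun _ => 0)), rsum_const in H by (intros; ring).
    lra.
Qed.

Lemma catalan_upper n : (1 <= n)%nat -> (INR n * N n) ^ 2 * (3 * INR n - 2) <= 16 ^ (n - 1).
Proof.
  induction n; intros Hn; [lia|]. destruct n; [simpl; rewrite N1; lra|].
  assert (IH := IHn ltac:(lia)). replace (S (S n) - 1)%nat with (S (S n - 1)) by lia.
  rewrite <- (tech_pow_Rmult 16), catalan_step, (S_INR (S n)) by lia.
  set (x := INR (S n)) in *. set (y := N (S n)) in *.
  assert (1 <= x) by (apply (le_INR 1); lia).
  assert (P : (4 * x - 2) ^ 2 * (3 * (x + 1) - 2) <= 16 * x ^ 2 * (3 * x - 2)) by nra.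
  assert (Hy : 0 <= y ^ 2) by nra.
  assert (Q := Rmult_le_compat_r (y ^ 2) _ _ Hy P). nra.
Qed.

Lemma catalan_lower n : (2 <= n)%nat -> 16 ^ (n - 1) <= 4 * (INR n - 1) * (INR n * N n) ^ 2.
Proof.
  induction n; intros Hn; [lia|].
  destruct (Nat.eq_dec n 1) as [->|Hn1]; [rewrite (Nconv 2) by lia; simpl; rewrite N0, N1; lra|].
  assert (IH := IHn ltac:(lia)). replace (S n - 1)%nat with (S (n - 1)) by lia.
  rewrite <- (tech_pow_Rmult 16), catalan_step, (S_INR n) by lia.
  set (x := INR n) in *. set (y := N n) in *.
  assert (2 <= x) by (apply (le_INR 2); lia).
  assert (P : 16 * (4 * (x - 1) * x ^ 2) <= 4 * (x + 1 - 1) * (4 * x - 2) ^ 2) by nra.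
  assert (Hy : 0 <= y ^ 2) by nra.
  assert (Q := Rmult_le_compat_r (y ^ 2) _ _ Hy P). nra.
Qed.

Lemma catalan_ge_4pow n : (2 <= n)%nat -> 4 ^ n <= 8 * INR n ^ 2 * N n.
Proof.
  intros Hn. assert (HL := catalan_lower n Hn). set (r := INR n) in *.
  assert (Hr : 2 <= r) by (apply (le_INR 2); lia).
  assert (E16 : 16 ^ (n - 1) = (4 ^ (n - 1)) ^ 2).
  { rewrite <- pow_mult, Nat.mul_comm, pow_mult. f_equal. ring. }
  assert (E4 : 4 ^ n = 4 * 4 ^ (n - 1)) by (replace n with (S (n - 1)) at 1 by lia; reflexivity).
  assert (P4 : 0 <= 4 ^ (n - 1)) by (apply pow_le; lra).
  assert (0 <= N n) by (left; apply catalan_pos; lia).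
  assert (Sq : (4 ^ (n - 1)) ^ 2 <= (2 * r ^ 2 * N n) ^ 2).
  { rewrite <- E16. apply Rle_trans with (1 := HL). assert (0 <= (r * N n) ^ 2) by nra. nra. }
  assert (0 <= 2 * r ^ 2 * N n) by (assert (0 <= r ^ 2) by nra; nra).
  assert (4 ^ (n - 1) <= 2 * r ^ 2 * N n) by (apply sq_le_reg; assumption). lra.
Qed.

Lemma catalan_ratio m n : (1 <= m)%nat -> (m <= n)%nat -> (2 <= n)%nat -> (n + 1 <= 3 * m)%nat ->
  INR m * N m * 4 ^ (n - m) <= 2 * INR n * N n.
Proof.
  intros Hm Hmn Hn H3.
  assert (HU := catalan_upper m Hm). assert (HL := catalan_lower n Hn).
  assert (H3R : INR n - 1 <= 3 * INR m - 2).
  { apply le_INR in H3. rewrite plus_INR, mult_INR in H3. simpl in H3. lra. }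
  assert (Hn1 : 1 <= INR n - 1) by (apply (le_INR 2) in Hn; simpl in Hn; lra).
  assert (E16 : 16 ^ (m - 1) * (4 ^ (n - m)) ^ 2 = 16 ^ (n - 1)).
  { replace ((4 ^ (n - m)) ^ 2) with (16 ^ (n - m))
      by (rewrite <- pow_mult, Nat.mul_comm, pow_mult; f_equal; ring).
    rewrite <- pow_add. f_equal. lia. }
  assert (P4 : 0 < (4 ^ (n - m)) ^ 2) by (apply pow_lt, pow_lt; lra).
  assert (0 <= N m) by (left; apply catalan_pos; lia).
  assert (0 <= N n) by (left; apply catalan_pos; lia).
  assert (0 <= INR m) by apply pos_INR.
  set (X := INR m * N m) in *. set (Y := INR n * N n) in *.
  assert (X0 : 0 <= X) by (unfold X; nra). assert (Y0 : 0 <= Y) by (unfold Y; nra).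
  assert (Sq : (X * 4 ^ (n - m)) ^ 2 * (3 * INR m - 2) <= (2 * Y) ^ 2 * (3 * INR m - 2)).
  { apply Rle_trans with (16 ^ (n - 1)); [rewrite <- E16 | apply Rle_trans with (1 := HL)]; nra. }
  replace (2 * INR n * N n) with (2 * Y) by (unfold Y; ring).
  apply sq_le_reg; [lra|]. apply Rmult_le_reg_r with (3 * INR m - 2); [lra | exact Sq].
Qed.
End Catalan.

Section Enumeration.
Variable T : nat -> list tree.
Hypothesis hT : forall n, enumerates n (T n).

Lemma in_T t n : In t (T n) <-> leaves t = n.
Proof. apply (proj2 (hT n)). Qed.

Lemma T_zero : T O = [].
Proof.
  destruct (T O) as [|t l] eqn:E; auto. exfalso.
  assert (leaves t = O) by (apply in_T; rewrite E; simpl; auto).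
  pose proof (leaves_pos t). lia.
Qed.

Lemma lsum_T_one (F : tree -> R) : lsum F (T 1%nat) = F Leaf.
Proof.
  assert (HP : Permutation (T 1%nat) [Leaf]).
  { apply NoDup_Permutation; [apply hT | repeat constructor; easy|].
    intros x. rewrite in_T. split; [intros H; apply leaves_one in H; subst; simpl; auto|].
    intros [<-|[]]. reflexivity. }
  rewrite (lsum_perm F _ _ HP), lsum_cons, lsum_nil. ring.
Qed.

Lemma T_root_split n : (2 <= n)%nat ->
  Permutation (T n)
    (flat_map (fun i => flat_map (fun l => map (Node l) (T (n - i)%nat)) (T i)) (seq 0 (S n))).
Proof.
  intros Hn. apply NoDup_Permutation; [apply hT| |].
  - apply NoDup_flat_map_disj; [apply seq_NoDup| |].
    + intros i _. apply NoDup_flat_map_disj; [apply hT| |].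
      * intros l _. apply FinFun.Injective_map_NoDup; [|apply hT]. intros a b E; injection E; auto.
      * intros x y z _ _ Hx Hy. apply in_map_iff in Hx as [a [<- _]].
        apply in_map_iff in Hy as [b [E _]]. injection E; auto.
    + intros i j z _ _ Hi Hj. apply in_flat_map in Hi as [l [Hl Hz]].
      apply in_flat_map in Hj as [l' [Hl' Hz']].
      apply in_map_iff in Hz as [r [<- _]]. apply in_map_iff in Hz' as [r' [E _]].
      injection E; intros; subst. apply in_T in Hl. apply in_T in Hl'. congruence.
  - intros t. rewrite in_T, in_flat_map. split.
    + intros Ht. destruct t as [|l r]; [simpl in Ht; lia|]. simpl in Ht.
      exists (leaves l). split; [apply in_seq; lia|].
      apply in_flat_map. exists l. split; [apply in_T; auto|]. apply in_map, in_T. lia.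
    + intros [i [Hi Ht]]. apply in_seq in Hi. apply in_flat_map in Ht as [l [Hl Ht]].
      apply in_map_iff in Ht as [r [<- Hr]]. apply in_T in Hl. apply in_T in Hr. simpl. lia.
Qed.

Lemma lsum_root_split n (F : tree -> R) : (2 <= n)%nat ->
  lsum F (T n) = rsum (fun i => lsum (fun l => lsum (fun r => F (Node l r)) (T (n - i)%nat)) (T i)) (S n).
Proof.
  intros Hn. rewrite (lsum_perm F _ _ (T_root_split n Hn)), lsum_flat_map, lsum_seq.
  apply rsum_ext. intros i _. rewrite lsum_flat_map. apply lsum_ext_in. intros l _.
  rewrite lsum_map. reflexivity.
Qed.

Definition ntrees n := INR (length (T n)).

Lemma ntrees_lsum n : ntrees n = lsum (fun _ => 1) (T n).
Proof. unfold ntrees. rewrite lsum_const. ring. Qed.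

Lemma ntrees_zero : ntrees O = 0.
Proof. unfold ntrees. rewrite T_zero. reflexivity. Qed.

Lemma ntrees_one : ntrees 1%nat = 1.
Proof. rewrite ntrees_lsum, lsum_T_one. reflexivity. Qed.

Lemma ntrees_conv n : (2 <= n)%nat ->
  ntrees n = rsum (fun i => ntrees i * ntrees (n - i)%nat) (S n).
Proof.
  intros Hn. rewrite ntrees_lsum, (lsum_root_split n) by auto. apply rsum_ext. intros i _.
  unfold ntrees. rewrite !lsum_const. ring.
Qed.

Lemma ntrees_pos n : (1 <= n)%nat -> 0 < ntrees n.
Proof. apply catalan_pos; [exact ntrees_zero | exact ntrees_one | exact ntrees_conv]. Qed.

Definition ncat k := lsum (fun t => if caterpillar t then 1 else 0) (T k).

Lemma ncat_value k : (2 <= k)%nat -> ncat k = 2 ^ (k - 2).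
Proof.
  intros Hk. unfold ncat. rewrite lsum_count.
  assert (HP : Permutation (filter caterpillar (T k)) (caterpillars (k - 2))).
  { apply NoDup_Permutation; [apply NoDup_filter, hT | apply caterpillars_nodup|].
    intros t. rewrite filter_In, caterpillars_spec, in_T. split; intros [A B]; split; auto; lia. }
  rewrite (Permutation_length HP), caterpillars_length, pow_INR. reflexivity.
Qed.

Lemma lsum_caterpillar_of_size k n :
  lsum (fun t => if caterpillar t && Nat.eqb (leaves t) k then 1 else 0) (T n)
  = if Nat.eqb n k then ncat k else 0.
Proof.
  destruct (Nat.eqb_spec n k) as [<-|Hnk].
  - apply lsum_ext_in. intros t Ht. apply in_T in Ht. rewrite Ht, Nat.eqb_refl.
    destruct (caterpillar t); reflexivity.
  - rewrite (lsum_ext_in _ (fun _ => 0)); [rewrite lsum_const; ring|].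
    intros t Ht. apply in_T in Ht. rewrite Ht. destruct (Nat.eqb_spec n k); [lia|].
    destruct (caterpillar t); reflexivity.
Qed.

(** * Upper bound *)

Definition catsub k n := lsum (fun t => INR (ncatsub k t)) (T n).

(* A caterpillar subtree of [Node l r] is the root itself or lies in l or in r. *)
Lemma catsub_rec k n : (2 <= n)%nat ->
  catsub k n = (if Nat.eqb n k then ncat k else 0)
    + rsum (fun i => catsub k i * ntrees (n - i)%nat + ntrees i * catsub k (n - i)%nat) (S n).
Proof.
  intros Hn. rewrite <- (lsum_caterpillar_of_size k n).
  set (ind := fun t => if caterpillar t && Nat.eqb (leaves t) k then 1 else 0).
  unfold catsub at 1. rewrite (lsum_root_split n), (lsum_root_split n ind) by auto.
  rewrite <- rsum_plus. apply rsum_ext. intros i _.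
  rewrite (lsum_ext_in _ (fun l => lsum (fun r => ind (Node l r)) (T (n - i)%nat)
             + (ntrees (n - i)%nat * INR (ncatsub k l) + catsub k (n - i)%nat))).
  - rewrite !lsum_plus, lsum_scal, lsum_const. unfold catsub, ntrees. ring.
  - intros l _. rewrite (lsum_ext_in _ (fun r => ind (Node l r) + (INR (ncatsub k l) + INR (ncatsub k r)))).
    + rewrite !lsum_plus, lsum_const. unfold catsub, ntrees. ring.
    + intros r _. rewrite ncatsub_node, !plus_INR. unfold ind. destruct (_ && _); simpl; ring.
Qed.

(* The weighted Catalan convolution shifted by k - 1 positions. *)
Lemma shifted_catalan_sum k n : (2 <= k)%nat -> (2 <= n)%nat ->
  (if Nat.eqb n k then 1 else 0)
  + 2 * rsum (fun i => INR (i + 1 - k) * ntrees (i + 1 - k)%nat * ntrees (n - i)%nat) (S n)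
  = INR (n + 1 - k) * ntrees (n + 1 - k)%nat.
Proof.
  intros Hk Hn. assert (N0 := ntrees_zero). assert (N1 := ntrees_one).
  destruct (Nat.lt_ge_cases n k) as [Hnk|Hnk].
  { replace (n + 1 - k)%nat with O by lia. destruct (Nat.eqb_spec n k); [lia|].
    rewrite (rsum_ext _ (fun _ => 0)), rsum_const; [simpl; ring|].
    intros i Hi. replace (i + 1 - k)%nat with O by lia. simpl. ring. }
  set (m := (n + 1 - k)%nat).
  replace (S n) with ((k - 1) + S m)%nat by (unfold m; lia). rewrite rsum_split.
  rewrite (rsum_ext _ (fun _ => 0) (k - 1)), rsum_const.
  2:{ intros i Hi. replace (i + 1 - k)%nat with O by lia. simpl. ring. }
  rewrite (rsum_ext _ (fun j => INR j * ntrees j * ntrees (m - j)%nat)).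
  2:{ intros j Hj. unfold m. replace (k - 1 + j + 1 - k)%nat with j by lia.
      replace (n - (k - 1 + j))%nat with (n + 1 - k - j)%nat by lia. reflexivity. }
  destruct (Nat.eq_dec m 1) as [Hm|Hm].
  - replace n with k by (unfold m in Hm; lia). rewrite Nat.eqb_refl, Hm. simpl. rewrite N0, N1. ring.
  - rewrite (catalan_weighted ntrees ntrees_conv) by (unfold m; lia).
    destruct (Nat.eqb_spec n k); [unfold m in Hm; lia|]. field.
Qed.

Lemma catsub_value k n : (2 <= k)%nat ->
  catsub k n = ncat k * (INR (n + 1 - k) * ntrees (n + 1 - k)%nat).
Proof.
  intros Hk. induction n as [n IH] using (well_founded_induction Wf_nat.lt_wf).
  destruct (Nat.lt_ge_cases n 2) as [Hn|Hn].
  - replace (n + 1 - k)%nat with O by lia. simpl INR. rewrite Rmult_0_l, Rmult_0_r.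
    destruct n as [|[|]]; try lia; unfold catsub; [rewrite T_zero; reflexivity|].
    rewrite lsum_T_one. unfold ncatsub. simpl. destruct k as [|[|]]; [lia | lia | reflexivity].
  - rewrite catsub_rec, rsum_conv_sym by auto.
    rewrite (rsum_ext _ (fun i => ncat k * (INR (i + 1 - k) * ntrees (i + 1 - k)%nat * ntrees (n - i)%nat))).
    + rewrite rsum_scal, <- (shifted_catalan_sum k n) by auto.
      destruct (Nat.eqb n k); ring.
    + intros i Hi. destruct (Nat.eq_dec i n) as [->|Hin].
      * rewrite Nat.sub_diag, ntrees_zero. ring.
      * rewrite IH by lia. ring.
Qed.

Definition n_gamma_ge k n := lsum (fun t => if Nat.leb k (gamma t) then 1 else 0) (T n).

Lemma n_gamma_ge_bound k n : (2 <= n)%nat -> (2 <= k)%nat -> (3 * k <= 2 * n + 2)%nat ->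
  n_gamma_ge k n * 2 ^ k <= 2 * INR n * ntrees n.
Proof.
  intros Hn Hk H3. set (m := (n + 1 - k)%nat).
  assert (Hcat : n_gamma_ge k n <= catsub k n).
  { apply lsum_le_in. intros t _. destruct (Nat.leb_spec k (gamma t)).
    - apply (le_INR 1), ncatsub_pos. lia.
    - apply pos_INR. }
  rewrite catsub_value, ncat_value in Hcat by auto. fold m in Hcat.
  assert (HR := catalan_ratio ntrees ntrees_zero ntrees_one ntrees_conv m n
                  ltac:(unfold m; lia) ltac:(unfold m; lia) Hn ltac:(unfold m; lia)).
  assert (E : 2 ^ (k - 2) * 2 ^ k = 4 ^ (n - m)).
  { rewrite <- pow_add. replace 4 with (2 ^ 2) by ring. rewrite <- pow_mult. f_equal. unfold m. lia. }
  apply Rle_trans with (2 ^ (k - 2) * (INR m * ntrees m) * 2 ^ k).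
  - apply Rmult_le_compat_r; [apply pow_le; lra | exact Hcat].
  - replace (2 ^ (k - 2) * (INR m * ntrees m) * 2 ^ k) with (INR m * ntrees m * (2 ^ (k - 2) * 2 ^ k))
      by ring. rewrite E. exact HR.
Qed.

Definition gamma_sum n := lsum (fun t => INR (gamma t)) (T n).

Lemma gamma_sum_layers K k0 n : (K <= k0)%nat ->
  gamma_sum n <= INR K * ntrees n + rsum (fun j => n_gamma_ge (K + 1 + j) n) (k0 - K)
                 + INR n * n_gamma_ge k0 n.
Proof.
  intros HK.
  replace (INR K * ntrees n + rsum (fun j => n_gamma_ge (K + 1 + j) n) (k0 - K) + INR n * n_gamma_ge k0 n)
    with (lsum (fun t => INR K + rsum (fun j => if Nat.leb (K + 1 + j) (gamma t) then 1 else 0) (k0 - K)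
                         + INR n * (if Nat.leb k0 (gamma t) then 1 else 0)) (T n)).
  - apply lsum_le_in. intros t Ht. apply layer_cake; [|exact HK].
    rewrite <- (proj1 (in_T t n) Ht). apply gamma_le_leaves.
  - rewrite !lsum_plus, lsum_const, lsum_scal.
    rewrite (lsum_rsum_swap (fun j t => if Nat.leb (K + 1 + j) (gamma t) then 1 else 0)).
    unfold n_gamma_ge, ntrees. ring.
Qed.

Lemma gamma_sum_upper n : (20 <= Nat.log2 n)%nat ->
  gamma_sum n <= (INR (Nat.log2 n) + 4) * ntrees n.
Proof.
  intros Ha. assert (Hn0 : (0 < n)%nat) by (destruct n; [change (Nat.log2 0) with 0%nat in Ha | ]; lia).
  set (a := Nat.log2 n) in *. destruct (Nat.log2_spec n Hn0) as [L1 L2]. fold a in L1, L2.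
  assert (A4 := pow2_ge_linear a ltac:(lia)).
  (* levels below K = a + 1 cost at most K; levels from k0 = 2a + 3 on are negligible *)
  set (K := S a). set (k0 := (2 * a + 3)%nat).
  assert (HN : 0 <= ntrees n) by apply pos_INR.
  assert (Hr : 0 <= INR n) by apply pos_INR.
  assert (HnK : INR n <= 2 ^ K).
  { apply Nat.lt_le_incl, le_INR in L2. rewrite pow_INR in L2. exact L2. }
  assert (Hge : forall k, (2 <= k)%nat -> (k <= k0)%nat ->
            n_gamma_ge k n <= 2 * INR n * ntrees n * / 2 ^ k).
  { intros k H1 H2. assert (P : 0 < 2 ^ k) by (apply pow_lt; lra).
    apply Rmult_le_reg_r with (2 ^ k); [exact P|]. rewrite Rmult_assoc, Rinv_l, Rmult_1_r by lra.
    apply n_gamma_ge_bound; unfold k0 in *; lia. }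
  assert (Tail : rsum (fun j => n_gamma_ge (K + 1 + j) n) (k0 - K) <= 2 * ntrees n).
  { apply Rle_trans with (rsum (fun j => 2 * INR n * ntrees n * / 2 ^ (K + 1 + j)) (k0 - K)).
    - apply rsum_le. intros j Hj. apply Hge; unfold K, k0 in *; lia.
    - rewrite rsum_scal. apply Rle_trans with (2 * INR n * ntrees n * / 2 ^ K).
      + apply Rmult_le_compat_l; [nra | apply geometric_tail].
      + assert (0 < 2 ^ K) by (apply pow_lt; lra).
        apply Rmult_le_reg_r with (2 ^ K); [lra|]. rewrite Rmult_assoc, Rinv_l by lra. nra. }
  assert (Top : INR n * n_gamma_ge k0 n <= ntrees n).
  { assert (B := Hge k0 ltac:(unfold k0; lia) (le_n _)).
    assert (P2 : 2 * INR n ^ 2 <= 2 ^ k0).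
    { replace (2 ^ k0) with (2 * (2 ^ K) ^ 2)
        by (unfold k0, K; rewrite <- pow_mult; replace (2 * a + 3)%nat with (1 + S a * 2)%nat by lia;
            rewrite pow_add; ring).
      nra. }
    assert (0 < 2 ^ k0) by (apply pow_lt; lra).
    apply Rle_trans with (INR n * (2 * INR n * ntrees n * / 2 ^ k0)); [apply Rmult_le_compat_l; auto|].
    apply Rmult_le_reg_r with (2 ^ k0); [lra|]. rewrite !Rmult_assoc, Rinv_l by lra. nra. }
  assert (HK : INR K = INR a + 1) by (unfold K; rewrite S_INR; ring).
  assert (L := gamma_sum_layers K k0 n ltac:(unfold K, k0; lia)). nra.
Qed.

(** * Lower bound *)

Definition n_gamma_lt k n := lsum (fun t => if Nat.ltb (gamma t) k then 1 else 0) (T n).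

Lemma n_gamma_lt_nonneg k n : 0 <= n_gamma_lt k n.
Proof. apply lsum_nonneg. intros. destruct (Nat.ltb _ _); lra. Qed.

Lemma n_gamma_lt_le k n : n_gamma_lt k n <= ntrees n.
Proof. rewrite ntrees_lsum. apply lsum_le_in. intros. destruct (Nat.ltb _ _); lra. Qed.

(* gamma (Node l r) < k needs gamma l < k and gamma r < k, and fails when
   Node l r is itself a caterpillar with k leaves. *)
Lemma n_gamma_lt_rec k n : (2 <= n)%nat ->
  n_gamma_lt k n <= rsum (fun i => n_gamma_lt k i * n_gamma_lt k (n - i)%nat) (S n)
                    - (if Nat.eqb n k then ncat k else 0).
Proof.
  intros Hn. set (b := fun t => if Nat.ltb (gamma t) k then 1 else 0).
  rewrite <- (lsum_caterpillar_of_size k n). unfold n_gamma_lt at 1. fold b.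
  rewrite (lsum_root_split n b), (lsum_root_split n (fun t => if caterpillar t && _ then 1 else 0)) by auto.
  rewrite <- rsum_minus. apply rsum_le. intros i _.
  replace (n_gamma_lt k i * n_gamma_lt k (n - i)%nat)
    with (lsum (fun l => lsum (fun r => b l * b r) (T (n - i)%nat)) (T i)).
  2:{ rewrite (lsum_ext_in _ (fun l => n_gamma_lt k (n - i)%nat * b l)).
      - rewrite lsum_scal. unfold n_gamma_lt. fold b. ring.
      - intros l _. rewrite lsum_scal. unfold n_gamma_lt. fold b. ring. }
  rewrite <- lsum_minus. apply lsum_le_in. intros l _. rewrite <- lsum_minus.
  apply lsum_le_in. intros r _. unfold b.
  assert (Hg := gamma_node l r).
  destruct (caterpillar (Node l r) && Nat.eqb (leaves (Node l r)) k) eqn:Ec.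
  - apply andb_prop in Ec as [E1 E2]. apply Nat.eqb_eq in E2.
    assert (G := gamma_caterpillar _ E1).
    assert (Gl := gamma_le_leaves l). assert (Gr := gamma_le_leaves r).
    pose proof (leaves_pos l). pose proof (leaves_pos r). simpl in E2, G.
    destruct (Nat.ltb_spec (gamma (Node l r)) k); [lia|].
    destruct (Nat.ltb_spec (gamma l) k); [|lia]. destruct (Nat.ltb_spec (gamma r) k); [|lia]. lra.
  - destruct (Nat.ltb_spec (gamma (Node l r)) k).
    + destruct (Nat.ltb_spec (gamma l) k); [|lia]. destruct (Nat.ltb_spec (gamma r) k); [|lia]. lra.
    + destruct (Nat.ltb (gamma l) k), (Nat.ltb (gamma r) k); lra.
Qed.

(* 2 j^2 <= 2^j for j >= 7, which makes k^2 2^-(k+1) <= 1/4. *)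
Lemma pow2_ge_twice_square j : (7 <= j)%nat -> 2 * INR j ^ 2 <= 2 ^ j.
Proof.
  induction 1; [simpl; lra|]. rewrite S_INR. simpl pow.
  assert (7 <= INR m) by (apply (le_INR 7) in H; simpl in H; lra). nra.
Qed.

(* Below degree k the partial generating sums of n_gamma_lt k at
   x = (1 + u)/4, u = 2^-(k+1), are controlled by those of the Catalan numbers. *)
Lemma n_gamma_lt_prefix k M : (7 <= k)%nat -> (M <= k)%nat ->
  rsum (fun i => n_gamma_lt k i * ((1 + / 2 ^ (k + 1)) / 4) ^ i) M <= / 2 + INR k * / 2 ^ (k + 1).
Proof.
  intros Hk HM. set (u := / 2 ^ (k + 1)).
  assert (Hu0 : 0 < u) by (apply Rinv_0_lt_compat, pow_lt; lra).
  assert (Hku : INR k * u <= / 4).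
  { assert (H2 := pow2_ge_twice_square k Hk). assert (7 <= INR k) by (apply (le_INR 7) in Hk; simpl in Hk; lra).
    unfold u. rewrite pow_add. simpl (2 ^ 1). rewrite Rmult_1_r.
    apply Rmult_le_reg_r with (2 ^ k * 2); [apply Rmult_lt_0_compat; [apply pow_lt|]; lra|].
    rewrite Rmult_assoc, Rinv_l by (apply Rgt_not_eq, Rmult_lt_0_compat; [apply pow_lt|]; lra). nra. }
  assert (Hpow : (1 + u) ^ k <= 1 + 2 * INR k * u) by (apply bernoulli_converse; lra).
  apply Rle_trans with (rsum (fun i => (1 + u) ^ k * (ntrees i * (/ 4) ^ i)) M).
  - apply rsum_le. intros i Hi. rewrite Rdiv_def, Rpow_mult_distr.
    assert (n_gamma_lt k i <= ntrees i) by apply n_gamma_lt_le.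
    assert (0 <= n_gamma_lt k i) by apply n_gamma_lt_nonneg.
    assert ((1 + u) ^ i <= (1 + u) ^ k) by (apply Rle_pow; [lra | lia]).
    assert (0 <= (/ 4) ^ i) by (apply pow_le; lra).
    assert (0 <= (1 + u) ^ i * (/ 4) ^ i) by (apply Rmult_le_pos; [apply pow_le|]; lra).
    assert (0 <= ntrees i) by apply pos_INR.
    apply Rle_trans with ((1 + u) ^ i * (ntrees i * (/ 4) ^ i)); [nra|].
    apply Rmult_le_compat_r; [nra | exact H1].
  - rewrite rsum_scal. assert (Q := catalan_quarter ntrees ntrees_zero ntrees_one ntrees_conv M).
    assert (0 <= rsum (fun i => ntrees i * (/ 4) ^ i) M).
    { apply rsum_nonneg. intros. apply Rmult_le_pos; [apply pos_INR | apply pow_le; lra]. }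
    assert (0 <= (1 + u) ^ k) by (apply pow_le; lra). nra.
Qed.

Lemma ncat_power_ge k x : (2 <= k)%nat -> / 4 <= x -> / (4 * 2 ^ k) <= ncat k * x ^ k.
Proof.
  intros Hk Hx. rewrite ncat_value by exact Hk.
  assert (Hp : 0 < 2 ^ k) by (apply pow_lt; lra).
  assert (H4 : (/ 4) ^ k <= x ^ k) by (apply pow_incr; lra).
  assert (E4 : (/ 4) ^ k = / (2 ^ k * 2 ^ k))
    by (rewrite <- Rpow_mult_distr, pow_inv; f_equal; f_equal; ring).
  assert (E2 : 2 ^ (k - 2) = 2 ^ k / 4)
    by (replace k with (2 + (k - 2))%nat at 2 by lia; rewrite pow_add; simpl; field).
  rewrite E2. apply Rle_trans with (2 ^ k / 4 * / (2 ^ k * 2 ^ k)).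
  - right. field. lra.
  - apply Rmult_le_compat_l; [lra | rewrite <- E4; exact H4].
Qed.

(* The partial generating sums of n_gamma_lt k stay below 1 at x = (1 + u)/4:
   the caterpillars with k leaves missing from the recursion push the
   quadratic map P |-> x + P^2 - 2^(k-2) x^k below the fixed point 1/2 + k u. *)
Lemma n_gamma_lt_gf k n : (7 <= k)%nat ->
  n_gamma_lt k n * ((1 + / 2 ^ (k + 1)) / 4) ^ n <= 1.
Proof.
  intros Hk. set (u := / 2 ^ (k + 1)). set (x := (1 + u) / 4). set (y := / 2 + INR k * u).
  set (P := rsum (fun i => n_gamma_lt k i * x ^ i)).
  assert (Hp : 0 < 2 ^ k) by (apply pow_lt; lra).
  assert (Hu : u = / (2 * 2 ^ k)) by (unfold u; rewrite pow_add; simpl; f_equal; ring).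
  assert (Hu0 : 0 < u) by (rewrite Hu; apply Rinv_0_lt_compat; lra).
  assert (Hx : 0 < x) by (unfold x; lra).
  assert (HP : forall M, 0 <= P M).
  { intros M. apply rsum_nonneg. intros. apply Rmult_le_pos; [apply n_gamma_lt_nonneg | apply pow_le; lra]. }
  (* the defect 2^(k-2) x^k beats the quadratic error k^2 u^2 *)
  assert (Hdefect : u / 2 <= ncat k * x ^ k).
  { replace (u / 2) with (/ (4 * 2 ^ k)) by (rewrite Hu; field; lra).
    apply ncat_power_ge; [lia | unfold x; lra]. }
  assert (Hk2 : INR k ^ 2 * u <= / 4).
  { assert (H2 := pow2_ge_twice_square k Hk). rewrite Hu.
    apply Rmult_le_reg_r with (2 * 2 ^ k); [lra|]. rewrite Rmult_assoc, Rinv_l by lra. lra. }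
  assert (Hfix : x + y ^ 2 - ncat k * x ^ k <= y).
  { assert (Hq : INR k ^ 2 * u ^ 2 <= u / 4) by nra.
    replace (y ^ 2) with (/ 4 + INR k * u + INR k ^ 2 * u ^ 2) by (unfold y; field).
    replace x with ((1 + u) / 4) at 1 by reflexivity. unfold y. lra. }
  assert (Hall : forall M, P M <= y).
  { apply (partial_sums_bounded P x y (ncat k * x ^ k) k HP Hfix).
    - intros M HM. apply n_gamma_lt_prefix; auto.
    - intros M HM. unfold P.
      rewrite <- (rsum_single k (ncat k) (fun n => x ^ n) (S M)) by lia.
      apply partial_gf_step; [exact Hx | apply n_gamma_lt_nonneg | | | | | | lia].
      + unfold n_gamma_lt. rewrite T_zero. reflexivity.
      + rewrite <- ntrees_one. apply n_gamma_lt_le.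
      + destruct (Nat.eqb_spec 0 k); [lia | reflexivity].
      + destruct (Nat.eqb_spec 1 k); [lia | reflexivity].
      + intros m Hm. apply n_gamma_lt_rec, Hm. }
  assert (Hn := Hall (S n)). unfold P in Hn. rewrite rsum_S in Hn.
  assert (HPn := HP n). unfold P in HPn.
  assert (1 <= INR k) by (apply (le_INR 1); lia).
  assert (INR k <= INR k ^ 2) by nra.
  assert (INR k * u <= INR k ^ 2 * u) by (apply Rmult_le_compat_r; lra). unfold y in Hn. lra.
Qed.

(* Markov-type bound: the trees with gamma >= k contribute at least k each. *)
Lemma gamma_sum_ge k n : INR k * (ntrees n - n_gamma_lt k n) <= gamma_sum n.
Proof.
  replace (INR k * (ntrees n - n_gamma_lt k n))
    with (lsum (fun t => INR k * (1 - if Nat.ltb (gamma t) k then 1 else 0)) (T n))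
    by (rewrite lsum_scal, lsum_minus, ntrees_lsum; reflexivity).
  apply lsum_le_in. intros t _. destruct (Nat.ltb_spec (gamma t) k).
  - rewrite Rminus_diag, Rmult_0_r. apply pos_INR.
  - rewrite Rminus_0_r, Rmult_1_r. apply le_INR. auto.
Qed.

Lemma n_gamma_lt_small n : (20 <= Nat.log2 n)%nat ->
  n_gamma_lt (Nat.log2 n - Nat.log2 (Nat.log2 n) - 4) n * INR n ^ 2 <= 128 * ntrees n.
Proof.
  intros Ha. assert (Hn0 : (0 < n)%nat) by (destruct n; [change (Nat.log2 0) with 0%nat in Ha | ]; lia).
  set (a := Nat.log2 n) in *. set (b := Nat.log2 a). set (k := (a - b - 4)%nat).
  destruct (Nat.log2_spec n Hn0) as [L1 L2]. fold a in L1, L2.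
  destruct (Nat.log2_spec a ltac:(lia)) as [B1 B2]. fold b in B1, B2.
  assert (Hb4 := log2_small a Ha). fold b in Hb4.
  assert (Hk : (7 <= k)%nat) by (unfold k; lia).
  assert (Hn2 : (2 <= n)%nat) by (pose proof (Nat.pow_le_mono_r 2 1 a ltac:(lia) ltac:(lia)); simpl in *; lia).
  assert (Hlen : (2 ^ (k + 1) * (4 * a) <= n)%nat).
  { apply Nat.le_trans with (2 ^ (k + 1) * 2 ^ (b + 3))%nat.
    - apply Nat.mul_le_mono_l. rewrite Nat.pow_succ_r' in B2. rewrite Nat.pow_add_r. simpl (2 ^ 3)%nat. lia.
    - rewrite <- Nat.pow_add_r. replace (k + 1 + (b + 3))%nat with a by (unfold k; lia). exact L1. }
  set (u := / 2 ^ (k + 1)).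
  assert (Hgrowth : 16 ^ a <= (1 + u) ^ n).
  { replace (16 ^ a) with (2 ^ (4 * a)) by (rewrite pow_mult; f_equal; ring).
    apply one_plus_pow_growth, Hlen. }
  assert (Hgf := n_gamma_lt_gf k n Hk). fold u in Hgf.
  assert (Hcat := catalan_ge_4pow ntrees ntrees_zero ntrees_one ntrees_conv n Hn2).
  set (N := ntrees n) in *. set (F := n_gamma_lt k n) in *. set (r := INR n) in *.
  assert (F0 : 0 <= F) by apply n_gamma_lt_nonneg.
  assert (Hr : 0 <= r) by apply pos_INR.
  assert (C2 : F * (1 + u) ^ n <= 4 ^ n).
  { rewrite Rdiv_def, Rpow_mult_distr, pow_inv in Hgf.
    assert (0 < 4 ^ n) by (apply pow_lt; lra).
    apply Rmult_le_reg_r with (/ 4 ^ n); [apply Rinv_0_lt_compat; lra|]. rewrite Rinv_r by lra. lra. }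
  assert (C3 : r ^ 4 <= 16 * 16 ^ a).
  { apply Nat.lt_le_incl, le_INR in L2. rewrite pow_INR in L2.
    replace (INR 2) with 2 in L2 by reflexivity. fold r in L2.
    replace (16 * 16 ^ a) with ((2 ^ S a) ^ 4) by (rewrite <- !pow_mult; replace 16 with (2 ^ 4) by ring;
      rewrite <- pow_mult, <- (pow_add 2 4); f_equal; lia).
    apply pow_incr. lra. }
  assert (F * 16 ^ a <= 8 * r ^ 2 * N) by nra.
  assert (F * r ^ 4 <= 128 * r ^ 2 * N) by nra.
  assert (0 < r ^ 2) by (apply pow_lt, (lt_INR 0); lia).
  apply Rmult_le_reg_r with (r ^ 2); [assumption | nra].
Qed.

Lemma gamma_sum_lower n : (20 <= Nat.log2 n)%nat ->
  (INR (Nat.log2 n) - INR (Nat.log2 (Nat.log2 n)) - 5) * ntrees n <= gamma_sum n.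
Proof.
  intros Ha. assert (Hn0 : (0 < n)%nat) by (destruct n; [change (Nat.log2 0) with 0%nat in Ha | ]; lia).
  assert (Hsmall := n_gamma_lt_small n Ha).
  set (a := Nat.log2 n) in *. set (b := Nat.log2 a) in *. set (k := (a - b - 4)%nat) in *.
  assert (Hb4 := log2_small a Ha). fold b in Hb4.
  assert (Hge := gamma_sum_ge k n).
  destruct (Nat.log2_spec n Hn0) as [L1 _]. fold a in L1.
  assert (HkR : INR k = INR a - INR b - 4) by (unfold k; rewrite !minus_INR by lia; simpl; ring).
  assert (Hk128 : 128 * INR k <= INR n ^ 2).
  { assert (H4 := pow2_ge_square a ltac:(lia)).
    assert (Hk : (128 * k <= n * n)%nat).
    { assert (128 <= 2 ^ a)%nat by (apply Nat.le_trans with (2 ^ 7)%nat; [simpl; lia | apply Nat.pow_le_mono_r; lia]).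
      assert (2 ^ a * 2 ^ a <= n * n)%nat by (apply Nat.mul_le_mono; exact L1).
      assert (k <= 2 ^ a)%nat by (unfold k; nia). nia. }
    apply le_INR in Hk. rewrite !mult_INR in Hk. simpl (INR 128) in Hk. lra. }
  assert (F0 := n_gamma_lt_nonneg k n). assert (N0 : 0 <= ntrees n) by apply pos_INR.
  assert (0 < INR n ^ 2) by (apply pow_lt, (lt_INR 0); lia).
  assert (HkF : INR k * n_gamma_lt k n <= ntrees n).
  { apply Rmult_le_reg_r with (INR n ^ 2); [assumption|].
    assert (INR k * (n_gamma_lt k n * INR n ^ 2) <= INR k * (128 * ntrees n))
      by (apply Rmult_le_compat_l; [apply pos_INR | exact Hsmall]).
    assert (128 * INR k * ntrees n <= INR n ^ 2 * ntrees n) by (apply Rmult_le_compat_r; lra).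
    lra. }
  rewrite HkR in *. nra.
Qed.

Lemma avg_gamma_bounds n : (20 <= Nat.log2 n)%nat ->
  INR (Nat.log2 n) - INR (Nat.log2 (Nat.log2 n)) - 5 <= avg_gamma (T n) <= INR (Nat.log2 n) + 4.
Proof.
  intros Ha. change (avg_gamma (T n)) with (gamma_sum n / ntrees n).
  assert (HN : 0 < ntrees n).
  { apply ntrees_pos. destruct n; [change (Nat.log2 0) with 0%nat in Ha|]; lia. }
  assert (Hup := gamma_sum_upper n Ha). assert (Hlow := gamma_sum_lower n Ha).
  split; apply Rmult_le_reg_r with (ntrees n); try exact HN;
    unfold Rdiv; rewrite Rmult_assoc, Rinv_l by lra; lra.
Qed.
End Enumeration.

Lemma log2_bounds n : (1 <= n)%nat -> INR (Nat.log2 n) <= log2 (INR n) < INR (Nat.log2 n) + 1.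
Proof.
  intros Hn. destruct (Nat.log2_spec n ltac:(lia)) as [L1 L2]. set (a := Nat.log2 n) in *.
  assert (ln2 : 0 < ln 2) by (rewrite <- ln_1; apply ln_increasing; lra).
  apply le_INR in L1. apply lt_INR in L2. rewrite pow_INR in L1, L2.
  replace (INR 2) with 2 in L1, L2 by reflexivity.
  assert (P : 0 < 2 ^ a) by (apply pow_lt; lra).
  assert (A1 : ln (2 ^ a) <= ln (INR n)).
  { destruct (Rle_lt_or_eq_dec _ _ L1) as [H|H]; [left; apply ln_increasing; auto | right; f_equal; exact H]. }
  assert (A2 := ln_increasing (INR n) _ ltac:(lra) L2).
  rewrite ln_pow in A1, A2 by lra. rewrite S_INR in A2. unfold log2. split.
  - apply Rmult_le_reg_r with (ln 2); auto. unfold Rdiv. rewrite Rmult_assoc, Rinv_l by lra. lra.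
  - apply Rmult_lt_reg_r with (ln 2); auto. unfold Rdiv. rewrite Rmult_assoc, Rinv_l by lra. lra.
Qed.

Lemma log2_sublinear eps : 0 < eps ->
  exists A, forall a, (A <= a)%nat -> INR (Nat.log2 a) <= eps * INR a.
Proof.
  intros Heps. destruct (INR_unbounded (2 / eps ^ 2 + 16)) as [A HA]. exists A. intros a Ha.
  apply le_INR in Ha. set (x := INR a) in *.
  assert (Hx : 2 / eps ^ 2 + 16 < x) by lra.
  assert (He2 : 0 < eps ^ 2) by (apply pow_lt; lra).
  assert (P : 0 <= 2 / eps ^ 2) by (apply Rlt_le, Rdiv_lt_0_compat; lra).
  assert (Hsq := log2_square a ltac:(apply (INR_lt 0); fold x; simpl; lra)).
  apply le_INR in Hsq. rewrite mult_INR, plus_INR in Hsq. fold x in Hsq. simpl (INR 16) in Hsq.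
  apply sq_le_reg; [nra|].
  assert (2 <= eps ^ 2 * x).
  { apply Rle_trans with (eps ^ 2 * (2 / eps ^ 2)); [right; field; lra|].
    apply Rmult_le_compat_l; lra. }
  nra.
Qed.

(* The real-number core of the limit: log2 n and E are both a + O(log a). *)
Lemma ratio_close L E a b e : 0 < e <= 1 -> a <= L <= a + 1 -> a - b - 5 <= E <= a + 4 ->
  0 <= b <= e * a / 4 -> 22 < e * a -> Rabs (L / E - 1) < e.
Proof.
  intros He HL HE Hb Hea.
  assert (Ha : 22 < a) by nra.
  assert (HeE : e * a - e * a / 4 - 5 * e <= e * E) by nra.
  assert (HE0 : 0 < E) by nra.
  replace (L / E - 1) with ((L - E) / E) by (field; lra).
  unfold Rdiv. rewrite Rabs_mult, Rabs_inv, (Rabs_pos_eq E) by lra.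
  apply Rmult_lt_reg_r with E; [exact HE0|]. rewrite Rmult_assoc, Rinv_l, Rmult_1_r by lra.
  apply Rabs_def1; lra.
Qed.

Lemma log2_ratio_limit (E : nat -> R) :
  (forall n, (20 <= Nat.log2 n)%nat ->
     INR (Nat.log2 n) - INR (Nat.log2 (Nat.log2 n)) - 5 <= E n <= INR (Nat.log2 n) + 4) ->
  Un_cv (fun n => log2 (INR n) / E n) 1.
Proof.
  intros HE eps Heps. set (e := Rmin eps 1).
  assert (He : 0 < e <= 1) by (split; [apply Rmin_pos | apply Rmin_r]; lra).
  destruct (log2_sublinear (e / 4) ltac:(lra)) as [A1 HA1].
  destruct (INR_unbounded (22 / e)) as [A2 HA2].
  exists (2 ^ (A1 + A2 + 20))%nat. intros n Hn. unfold R_dist.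
  assert (Ha : (A1 + A2 + 20 <= Nat.log2 n)%nat).
  { rewrite <- (Nat.log2_pow2 (A1 + A2 + 20)) by lia. apply Nat.log2_le_mono. lia. }
  assert (Hn1 : (1 <= n)%nat) by (pose proof (Nat.pow_nonzero 2 (A1 + A2 + 20) ltac:(lia)); lia).
  set (a := Nat.log2 n) in *.
  apply Rlt_le_trans with e; [|apply Rmin_l].
  assert (HL := log2_bounds n Hn1). fold a in HL.
  apply ratio_close with (a := INR a) (b := INR (Nat.log2 a)); [exact He | lra | apply HE; lia | |].
  - split; [apply pos_INR|]. assert (H := HA1 a ltac:(lia)). lra.
  - assert (HA2' : INR A2 <= INR a) by (apply le_INR; lia).
    apply Rmult_lt_reg_r with (/ e); [apply Rinv_0_lt_compat; lra|].
    replace (e * INR a * / e) with (INR a) by (field; lra). lra.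
Qed.

Theorem corollary4 (T : nat -> list tree)
  (hT : forall n, enumerates n (T n)) :
  Un_cv (fun n => (log2 (INR n) / avg_gamma (T n))%R) 1%R.
Proof. exact (log2_ratio_limit _ (avg_gamma_bounds T hT)). Qed.
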